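(* Let $(X,d)$ be a compact metric space and $f:X\to X$ a cw-expansive homeomorphism with cw-expansivity constant $\alpha>0$. For $\varepsilon>0$ let $N_\varepsilon>0$ be an integer such that $\max_{|n|\le N_\varepsilon}\operatorname{diam} f^n(C)>\alpha$ for every continuum $C\subset X$ with $\operatorname{diam}C\ge\varepsilon$ (such $N_\varepsilon$ exists). Then for every $x\in X$, every $0<\varepsilon<\alpha/2$ and every integer $n\ge N_\varepsilon$: (1) $f^n\big(CW^s_{\alpha/2}(x)\big)\subset CW^s_\varepsilon(f^n(x))$; (2) $CW^s_\varepsilon(x)\subset W^s(x)$; (3) $CW^s_\varepsilon(x)$ equals the connected component of $W^s_{\alpha/2}(x)\cap W^s_{\varepsilon,n}(x)$ containing $x$.
   Context: A homeomorphism $f:X\to X$ of a compact metric space is continuum-wise expansive (cw-expansive) with cw-expansivity constant $\alpha>0$ if $\sup_{n\in\mathbb Z}\operatorname{diam} f^n(C)>\alpha$ for every continuum $C\subset X$ containing more than one point. For $\varepsilon>0$ and $x\in X$: $W^s_\varepsilon(x)=\{y\in X:\ d(f^k(x),f^k(y))\le\varepsilon \text{ for all } k\ge 0\}$; $CW^s_\varepsilon(x)$ is the connected component of $W^s_\varepsilon(x)$ containing $x$; $W^s(x)=\{y\in X:\ d(f^k(x),f^k(y))\to 0 \text{ as } k\to\infty\}$; for an integer $n\ge0$, $W^s_{\varepsilon,n}(x)=\{y\in X:\ d(f^r(x),f^r(y))\le\varepsilon \text{ for } r=0,\dots,n\}$. *)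

From HB Require Import structures.
From mathcomp Require Import all_boot all_order all_algebra.
From mathcomp Require Import all_classical all_reals all_analysis.
Set Implicit Arguments. Unset Strict Implicit. Unset Printing Implicit Defensive.
Import Order.TTheory GRing.Theory Num.Theory numFieldNormedType.Exports.
Local Open Scope classical_set_scope.
Local Open Scope ring_scope.

Section Defs.
Context {R : realType} {X : metricType R}.

Definition homeo (f g : X -> X) :=
  [/\ continuous f, continuous g, cancel f g & cancel g f].

Definition zpow (f g : X -> X) (n : int) : X -> X :=
  match n with
  | Posz k => iter k f
  | Negz k => iter k.+1 g
  end.

Definition diam (A : set X) : R :=
  sup [set mdist x y | x in A & y in A].

Definition continuum (C : set X) :=
  [/\ C !=set0, compact C & connected C].

Definition nondegenerate (C : set X) := exists x y, [/\ C x, C y & x != y].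

Definition cw_expansive (f g : X -> X) (alpha : R) :=
  0 < alpha /\
  forall C, continuum C -> nondegenerate C ->
    sup [set diam (zpow f g n @` C) | n in [set: int]] > alpha.

Definition Ws_eps (f : X -> X) (eps : R) (x : X) : set X :=
  [set y | forall k : nat, mdist (iter k f x) (iter k f y) <= eps].

Definition CWs_eps (f : X -> X) (eps : R) (x : X) : set X :=
  connected_component (Ws_eps f eps x) x.

Definition Ws (f : X -> X) (x : X) : set X :=
  [set y | mdist (iter k f x) (iter k f y) @[k --> \oo] --> (0 : R)].

Definition Ws_eps_n (f : X -> X) (eps : R) (n : nat) (x : X) : set X :=
  [set y | forall r : nat, (r <= n)%N -> mdist (iter r f x) (iter r f y) <= eps].

End Defs.

From HB Require Import structures.
From mathcomp Require Import all_boot all_order all_algebra.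
From mathcomp Require Import all_classical all_reals all_analysis.
From mathcomp Require Import zify lra.
Import Order.TTheory GRing.Theory Num.Theory numFieldNormedType.Exports.
Local Open Scope classical_set_scope.
Local Open Scope ring_scope.

(* Parts (1) and (3): if a point of f^n(CW^s_{alpha/2}(x)) left the eps-tube
   around the orbit of x at some time k + n, then f^(k+n)(CW^s_{alpha/2}(x))
   would be a continuum of diameter at least eps, so some f^m with |m| <= N
   would blow it up beyond alpha; since n >= N, the time k + n + m is still
   nonnegative, where the whole continuum lies within alpha/2 of the orbit of
   x.  Part (3) follows from (1): the component of
   W^s_{alpha/2}(x) & W^s_{eps,n}(x) lies in CW^s_{alpha/2}(x), so by (1) its
   points also stay eps-close to the orbit of x after time n.
   Part (2): if y in CW^s_eps(x) is not asymptotic to x, take an ultrafilter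
   U on nat, finer than the cofinite filter, along which
   d(f^k x, f^k y) >= delta > 0; along U, f^k x and f^k y converge to points
   p <> q.  The Kuratowski upper limit L of the continua f^k(CW^s_eps(x))
   along U is then a nondegenerate continuum (connectedness uses compactness
   and normality), and every f^j(L) lies in the closed eps-ball around f^j p.
   So diam f^j(L) <= 2 eps < alpha for all j, against cw-expansivity. *)

Lemma continuous_iter {T : topologicalType} (h : T -> T) k :
  continuous h -> continuous (iter k h).
Proof.
move=> hc; elim: k => [|k IHk] x /=; first exact: cvg_id.
exact: continuous_comp (IHk x) (hc _).
Qed.

Lemma compact_ultra_cvg {T : topologicalType} {I : Type} {U : set_system I}
    (a : I -> T) :
  compact [set: T] -> UltraFilter U -> exists p : T, a @ U --> p.
Proof.
move=> cT UU; have [p [_ clp]] := cT (a @ U) _ filterT.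
exists p => W pW; case: (in_ultra_setVsetC (a @^-1` W) UU) => // nW.
by have [w [nWw Ww]] := clp (~` W) _ nW pW.
Qed.

Lemma open_disjoint_separated {T : topologicalType} {U V : set T} :
  open U -> open V -> U `&` V = set0 -> separated U V.
Proof.
have sep (A B : set T) : open B -> A `&` B = set0 -> closure A `&` B = set0.
  move=> oB AB0; apply/disjoints_subset => z clAz Bz.
  have [w [Aw Bw]] := clAz B (open_nbhs_nbhs (conj oB Bz)).
  by have : (A `&` B) w by []; rewrite AB0.
move=> oU oV UV0; split; first exact: sep.
by rewrite setIC; apply: sep => //; rewrite setIC.
Qed.

Lemma separated_closedl {T : topologicalType} {A B : set T} :
  separated A B -> closed (A `|` B) -> closed A.
Proof.
move=> [clAB _] clU z clAz; have /clU [// | Bz] : closure (A `|` B) z.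
  by apply: closureS clAz; exact: subsetUl.
by have : (closure A `&` B) z by []; rewrite clAB.
Qed.

Section upper_limit.
Context {T : topologicalType} {I : Type}.

(* The Kuratowski upper limit of the sets C k along F: the points every
   neighbourhood of which meets C k for F-frequently many k. *)
Definition upper_limit (F : set_system I) (C : I -> set T) : set T :=
  cluster (filter_from F (fun A => \bigcup_(k in A) C k)).

Lemma upper_limitP F C z : upper_limit F C z <->
  forall A W, F A -> nbhs z W -> exists2 k, A k & C k `&` W !=set0.
Proof.
split=> [Lz A W FA zW | Lz B W [A FA sA] zW].
  have FCA : filter_from F (fun A => \bigcup_(k in A) C k) (\bigcup_(k in A) C k).
    by exists A.
  by have [w [[k Ak Ckw] Ww]] := Lz _ W FCA zW; exists k => //; exists w.
have [k Ak [w [Ckw Ww]]] := Lz A W FA zW.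
by exists w; split => //; apply: sA; exists k.
Qed.

Lemma upper_limit_closed F C : closed (upper_limit F C).
Proof.
by rewrite /upper_limit clusterE; apply: closed_bigI => A _; exact: closed_closure.
Qed.

Lemma cvg_upper_limit {F : set_system I} {FF : ProperFilter F} {C : I -> set T}
    {a : I -> T} {p : T} :
  a @ F --> p -> (\forall k \near F, C k (a k)) -> upper_limit F C p.
Proof.
move=> ap Ca; apply/upper_limitP => A W FA pW.
have [k [[Ak Cak] Wak]] := filter_ex (filterI (filterI FA Ca) (ap _ pW)).
by exists k => //; exists (a k).
Qed.

(* By compactness, a cluster point of the parts of the C k outside O would
   lie in the upper limit. *)
Lemma upper_limit_sub_open {F : set_system I} {FF : Filter F} {C : I -> set T}
    {O : set T} :
  compact [set: T] -> open O -> upper_limit F C `<=` O ->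
  \forall k \near F, C k `<=` O.
Proof.
move=> cT oO LO; apply: contrapT => notO.
pose G := filter_from F (fun A => \bigcup_(k in A) (C k `\` O)).
have GF A : F A -> G (\bigcup_(k in A) (C k `\` O)) by exists A.
have G_proper : ProperFilter G.
  apply: filter_from_proper; first apply: filter_from_filter.
  - by exists setT; exact: filterT.
  - move=> A B FA FB; exists (A `&` B); first exact: filterI.
    by move=> w [k [Ak Bk] Ckw]; split; exists k.
  - move=> A FA; apply: contrapT => noA; apply: notO.
    apply: filterS FA => k Ak w Ckw; apply: contrapT => nOw.
    by apply: noA; exists w; exists k.
have [z [_ Gz]] := cT G G_proper filterT.
have Oz : O z.
  apply: LO; apply/upper_limitP => A W FA zW.
  have [w [[k Ak [Ckw _]] Ww]] := Gz _ W (GF A FA) zW.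
  by exists k => //; exists w.
have [w [[k _ [_ nOw]] Ow]] := Gz _ _ (GF _ filterT) (open_nbhs_nbhs (conj oO Oz)).
exact: nOw.
Qed.

End upper_limit.

Lemma image_upper_limit {T U : topologicalType} {I : Type} (h : T -> U)
    (F : set_system I) (C : I -> set T) : continuous h ->
  h @` upper_limit F C `<=` upper_limit F (fun k => h @` C k).
Proof.
move=> hc _ [z /upper_limitP Lz <-]; apply/upper_limitP => A W FA hzW.
have [k Ak [w [Ckw Whw]]] := Lz A _ FA (hc z _ hzW).
by exists k => //; exists (h w); split => //; exists w.
Qed.

(* Separate the two pieces of a splitting of the upper limit by disjoint open
   sets: eventually C k lies in their union and meets the one containing p,
   while frequently it meets the other, against the connectedness of C k. *)
Lemma upper_limit_connected {R : realType} {T : pseudoMetricType R} {I : Type}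
    {F : set_system I} {FF : ProperFilter F} {C : I -> set T} {a : I -> T} {p : T} :
  compact [set: T] -> (forall k, connected (C k)) ->
  a @ F --> p -> (\forall k \near F, C k (a k)) -> connected (upper_limit F C).
Proof.
move=> cT Cconn ap Ca; set L := upper_limit F C.
have Lp : L p by exact: cvg_upper_limit ap Ca.
apply/connectedP => E [E0 LE sepE].
wlog Ep : E E0 LE sepE / E false p.
  move=> wlog; move: (Lp); rewrite LE => -[|Etp]; first exact: wlog.
  by apply: (wlog (fun b => E (~~ b))) => //=; rewrite 1?setUC 1?separatedC.
have clL : closed (E false `|` E true) by rewrite -LE; exact: upper_limit_closed.
have clE b : closed (E b).
  case: b; last exact: separated_closedl sepE clL.
  by apply: (@separated_closedl _ _ (E false)); [rewrite separatedC | rewrite setUC].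
have [U [V [oU oV EU EV UV0]]] := (@normal_openP R T).1 pseudometric_normal _ _
  (clE false) (clE true) (separated_disjoint sepE).
have CUV : \forall k \near F, C k `<=` U `|` V.
  apply: upper_limit_sub_open cT (openU oU oV) _.
  by rewrite -/L LE => z [/EU|/EV]; [left|right].
have nearU : \forall k \near F, C k `&` U !=set0.
  apply: filterS (filterI Ca (ap U (open_nbhs_nbhs (conj oU (EU _ Ep))))).
  by move=> k; exists (a k).
have [e Ee] := E0 true.
have Le : L e by rewrite LE; right.
have [k [CkUV [u [Cku Uu]]] [v [Ckv Vv]]] := (upper_limitP _ _ _).1 Le _ V
  (filterI CUV nearU) (open_nbhs_nbhs (conj oV (EV _ Ee))).
have notUV w : U w -> V w -> False.
  by move=> Uw Vw; have : (U `&` V) w by []; rewrite UV0.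
have [CkU | CkV] := connected_subset (open_disjoint_separated oU oV UV0) CkUV (Cconn k).
  exact: notUV (CkU _ Ckv) Vv.
exact: notUV Uu (CkV _ Cku).
Qed.

Lemma not_cvg0_ultra {R : realType} (u : nat -> R) : ~ (u k @[k --> \oo] --> 0) ->
  exists2 del : R, 0 < del & exists2 U : set_system nat, UltraFilter U &
    forall n, U [set k | (n <= k)%N /\ del <= `|u k|].
Proof.
move=> u_not0.
have [del del_gt0 far] : exists2 del : R, 0 < del &
    forall n, exists2 k, (n <= k)%N & del <= `|u k|.
  apply: contrapT => nfar; apply: u_not0; apply/cvgrPdist_le => e e_gt0.
  apply: contrapT => nevent; apply: nfar; exists e => // n.
  apply: contrapT => nk; apply: nevent; exists n => // k /= nk'.
  rewrite sub0r normrN; apply: ltW; rewrite ltNge; apply/negP => ek.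
  by apply: nk; exists k.
pose F0 := filter_from [set: nat] (fun n => [set k | (n <= k)%N /\ del <= `|u k|]).
have F0_proper : ProperFilter F0.
  apply: filter_from_proper; first apply: filter_from_filter; first by exists 0%N.
    move=> m n _ _; exists (maxn m n) => // k [mnk uk].
    by split; split => //; apply: leq_trans mnk; rewrite ?leq_maxl ?leq_maxr.
  by move=> n _; have [k nk uk] := far n; exists k.
have [U [UU F0U]] := ultraFilterLemma F0_proper.
by exists del => //; exists U => // n; apply: F0U; exists n.
Qed.

Section metric.
Context {R : realType} {X : metricType R}.

Lemma closed_mdist_le (c : X) e : closed [set z | mdist c z <= e].
Proof.
move=> z clz; apply/ler_addgt0Pr => r r_gt0.
have [w [/= cw]] := clz _ (nbhsx_ballx z r r_gt0); rewrite ballEmdist /= => zw.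
by have := metric_triangle c w z; rewrite (metric_sym w z); lra.
Qed.

Lemma lim_mdist_ge {I : Type} {F : set_system I} {FF : ProperFilter F}
    {a b : I -> X} {p q : X} {del : R} :
  a @ F --> p -> b @ F --> q -> (\forall k \near F, del <= mdist (a k) (b k)) ->
  del <= mdist p q.
Proof.
move=> ap bq farF; apply/ler_addgt0Pr => r r_gt0.
have r2_gt0 : 0 < r / 2 by rewrite divr_gt0.
have [k [[dk ak] bk]] := filter_ex (filterI (filterI farF
  (metricType_numDomainType.cvgr_dist_lt ap r2_gt0))
  (metricType_numDomainType.cvgr_dist_lt bq r2_gt0)).
have := metric_triangle (a k) p (b k); have := metric_triangle p q (b k).
by rewrite (metric_sym (a k) p) /=; lra.
Qed.

Lemma compact_mdist_bounded :
  compact [set: X] -> exists M, forall a b : X, mdist a b <= M.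
Proof.
move=> cX; have [[x0 _]|noX] := pselect (exists x0 : X, True); last first.
  by exists 0 => a; case: noX; exists a.
have /filter_ex[M x0_le] : \forall M \near +oo, [set: X] `<=` [set y | mdist x0 y < M].
  apply: (compact_near_coveringP _).1 cX R (pinfty_nbhs R)
    (fun M y => mdist x0 y < M) _ _.
  move=> x _; exists (ball x 1, [set M | mdist x0 x + 1 < M]).
    by split; [exact: nbhsx_ballx | apply: nbhs_pinfty_gt; exact: num_real].
  move=> [y M] [/= xy xM]; rewrite ballEmdist /= in xy.
  by have := metric_triangle x0 x y; lra.
exists (M + M) => a b; apply: le_trans (metric_triangle a x0 b) _.
by rewrite metric_sym; apply: lerD; apply: ltW; apply: x0_le.
Qed.

Lemma mdist_le_diam {A : set X} {a b : X} :
  compact [set: X] -> A a -> A b -> mdist a b <= diam A.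
Proof.
move=> cX Aa Ab; have [M leM] := compact_mdist_bounded cX.
apply: ub_le_sup; last by exists a => //; exists b.
by exists M => _ [a' _ [b' _ <-]].
Qed.

Lemma diam_le_double_radius (A : set X) c e :
  A !=set0 -> A `<=` [set z | mdist c z <= e] -> diam A <= 2 * e.
Proof.
move=> [a Aa] Ace; apply: ge_sup; first by exists (mdist a a); exists a => //; exists a.
move=> _ [z Az [w Aw <-]]; have := Ace _ Az; have := Ace _ Aw.
by have := metric_triangle z c w; rewrite (metric_sym z c) /=; lra.
Qed.

Lemma upper_limit_mdist_le {I : Type} {F : set_system I} {FF : Filter F}
    (C : I -> set X) (a : I -> X) (c : X) e :
  a @ F --> c -> (\forall k \near F, C k `<=` [set w | mdist (a k) w <= e]) ->
  upper_limit F C `<=` [set z | mdist c z <= e].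
Proof.
move=> ac Ce z /upper_limitP Lz /=; apply/ler_addgt0Pr => r r_gt0.
have r2_gt0 : 0 < r / 2 by rewrite divr_gt0.
have ac_near : \forall k \near F, mdist c (a k) < r / 2.
  exact: metricType_numDomainType.cvgr_dist_lt ac _ r2_gt0.
have [k [Cke ack] [w [Ckw]]] := Lz _ _ (filterI Ce ac_near) (nbhsx_ballx z _ r2_gt0).
rewrite ballEmdist /= => zw; have := Cke _ Ckw.
have := metric_triangle c (a k) w; have := metric_triangle c w z.
by rewrite (metric_sym w z) /=; lra.
Qed.

Lemma continuum_image {h : X -> X} {C : set X} :
  continuous h -> continuum C -> continuum (h @` C).
Proof.
move=> hc [[x Cx] cC conC]; have hCc := @continuous_subspaceT _ _ C _ hc.
split; first by exists (h x); exists x.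
  exact: continuous_compact.
exact: connected_continuous_connected.
Qed.

End metric.

Section dynamics.
Context {R : realType} {X : metricType R} (f g : X -> X).

Definition expands_within (alpha eps : R) (N : nat) :=
  forall C : set X, continuum C -> diam C >= eps ->
    exists n : int, `|n| <= N%:Z /\ diam (zpow f g n @` C) > alpha.

Lemma continuous_zpow n : homeo f g -> continuous (zpow f g n).
Proof. by case=> fc gc _ _; case: n => k; apply: continuous_iter. Qed.

Lemma zpow_iter {j : int} {k m : nat} y : cancel f g ->
  k%:Z + j = m%:Z -> zpow f g j (iter k f y) = iter m f y.
Proof.
move=> fK; case: j => [a|a] /= kjm; first by rewrite -iterD; congr iter; lia.
have -> : k = (a.+1 + m)%N by lia.
rewrite iterD -[g (iter a g _)]iterS; elim: a.+1 (iter m f y) => // n IHn z.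
by rewrite [iter n.+1 f z]iterS iterSr fK IHn.
Qed.

Lemma image_zpow_iter (A : set X) {j : int} {k m : nat} : cancel f g ->
  k%:Z + j = m%:Z -> zpow f g j @` (iter k f @` A) = iter m f @` A.
Proof.
by move=> fK kjm; rewrite image_comp; apply: eq_imagel => y _; exact: zpow_iter.
Qed.

Lemma closed_Ws_eps e x : continuous f -> closed (Ws_eps f e x).
Proof.
move=> fc; have -> : Ws_eps f e x =
    \bigcap_(k in [set: nat]) (iter k f @^-1` [set z | mdist (iter k f x) z <= e]).
  by apply/seteqP; split=> [y Wy k _ | y Wy k]; [exact: Wy | exact: Wy k I].
apply: closed_bigI => k _; apply: preimage_closed; last exact: closed_mdist_le.
by move=> y _; exact: continuous_iter.
Qed.

Lemma CWs_eps_refl e x : 0 <= e -> CWs_eps f e x x.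
Proof. by move=> e_ge0; apply: connected_component_refl => k; rewrite mdistxx. Qed.

Lemma iter_Ws_eps_sub e x t :
  iter t f @` Ws_eps f e x `<=` [set z | mdist (iter t f x) z <= e].
Proof. by move=> _ [y Wy <-]; exact: Wy. Qed.

Lemma continuum_CWs_eps e x : compact [set: X] -> continuous f -> 0 <= e ->
  continuum (CWs_eps f e x).
Proof.
move=> cX fc e_ge0; split; first by exists x; exact: CWs_eps_refl.
  apply: subclosed_compact cX (@subsetT _ _).
  exact: component_closed (closed_Ws_eps _ _ fc).
exact: component_connected.
Qed.

Lemma iter_CWs_eps_sub {alpha eps : R} {N : nat} {x : X} {n : nat} :
  compact [set: X] -> homeo f g -> 0 <= alpha -> expands_within alpha eps N ->
  (N <= n)%N ->
  iter n f @` CWs_eps f (alpha / 2) x `<=` CWs_eps f eps (iter n f x).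
Proof.
move=> cX hfg alpha_ge0 expands Nn; have [fc _ fK _] := hfg.
set C := CWs_eps f (alpha / 2) x.
have alpha2_ge0 : 0 <= alpha / 2 by rewrite divr_ge0.
have Cx : C x := CWs_eps_refl _ _ alpha2_ge0.
have Ct t : continuum (iter t f @` C).
  exact: continuum_image (continuous_iter _ t fc)
    (continuum_CWs_eps _ _ cX fc alpha2_ge0).
apply: connected_component_max; first by exists x.
  move=> _ [y Cy <-] k; rewrite -!iterD leNgt; apply/negP => far.
  have [m [mN expm]] := expands _ (Ct (k + n)%N)
    (le_trans (ltW far) (mdist_le_diam cX (imageP _ Cx) (imageP _ Cy))).
  have [t knmt] : exists t : nat, (k + n)%N%:Z + m = t%:Z.
    by exists (absz ((k + n)%N%:Z + m)); rewrite gez0_abs //; lia.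
  rewrite (image_zpow_iter C fK knmt) in expm.
  suff : diam (iter t f @` C) <= 2 * (alpha / 2) by lra.
  apply: diam_le_double_radius; first by exists (iter t f x); exists x.
  apply: subset_trans (iter_Ws_eps_sub _ _ _).
  by apply: image_subset; exact: connected_component_sub.
by case: (Ct n).
Qed.

Lemma zpow_upper_limit_sub {U : set_system nat} {UF : Filter U} {A : set X}
    {e : R} {x p : X} {j : int} :
  homeo f g -> (forall n, U [set k | (n <= k)%N]) -> iter k f x @[k --> U] --> p ->
  A `<=` Ws_eps f e x ->
  zpow f g j @` upper_limit U (fun k => iter k f @` A) `<=`
    [set z | mdist (zpow f g j p) z <= e].
Proof.
move=> hfg Uoo xp AW; have [_ _ fK _] := hfg.
apply: subset_trans (image_upper_limit _ _ _ (continuous_zpow j hfg)) _.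
apply: (upper_limit_mdist_le _ (fun k => zpow f g j (iter k f x))).
  exact: continuous_cvg (continuous_zpow j hfg p) xp.
apply: filterS (Uoo `|j|%N) => k /= jk _ [_ [y Ay <-] <-].
have [t kjt] : exists t : nat, k%:Z + j = t%:Z.
  by exists (absz (k%:Z + j)); rewrite gez0_abs //; lia.
by rewrite /= !(zpow_iter _ fK kjt); exact: AW.
Qed.

Lemma CWs_eps_sub_Ws {alpha eps : R} {x : X} : compact [set: X] -> homeo f g ->
  cw_expansive f g alpha -> 0 <= eps -> eps < alpha / 2 ->
  CWs_eps f eps x `<=` Ws f x.
Proof.
move=> cX hfg [_ cw] eps_ge0 eps_lt; have [fc _ _ _] := hfg.
set D := CWs_eps f eps x => y Dy.
apply: contrapT => /not_cvg0_ultra[del del_gt0 [U UU far]].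
have [p xp] := compact_ultra_cvg (fun k => iter k f x) cX UU.
have [q yq] := compact_ultra_cvg (fun k => iter k f y) cX UU.
set L := upper_limit U (fun k => iter k f @` D).
have Dx : D x := CWs_eps_refl _ _ eps_ge0.
have Lp : L p by apply: cvg_upper_limit xp _; apply: filterE => k; exists x.
have Lq : L q by apply: cvg_upper_limit yq _; apply: filterE => k; exists y.
have pq : p != q.
  rewrite -mdist_gt0; apply: lt_le_trans del_gt0 (lim_mdist_ge xp yq _).
  by apply: filterS (far 0%N) => k [_]; rewrite ger0_norm ?mdist_ge0.
have Lcont : continuum L.
  split; first by exists p.
    exact: subclosed_compact (upper_limit_closed _ _) cX (@subsetT _ _).
  apply: (upper_limit_connected cX _ xp); last by apply: filterE => k; exists x.
  by move=> k; case: (continuum_image (continuous_iter _ k fc)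
    (continuum_CWs_eps eps x cX fc eps_ge0)).
have Ldiam j : diam (zpow f g j @` L) <= 2 * eps.
  apply: diam_le_double_radius; first by exists (zpow f g j p); exists p.
  apply: (zpow_upper_limit_sub hfg _ xp); last exact: connected_component_sub.
  by move=> n; apply: filterS (far n) => k [].
have := cw L Lcont (ex_intro _ p (ex_intro _ q (And3 Lp Lq pq))).
suff : sup [set diam (zpow f g n @` L) | n in [set: int]] <= 2 * eps by lra.
apply: ge_sup; first by exists (diam (zpow f g 0 @` L)); exists 0.
by move=> _ [j _ <-]; exact: Ldiam.
Qed.

Lemma CWs_eps_component_Ws_eps_n {alpha eps : R} {N : nat} {x : X} {n : nat} :
  compact [set: X] -> homeo f g -> 0 <= eps -> eps <= alpha / 2 ->
  expands_within alpha eps N -> (N <= n)%N ->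
  CWs_eps f eps x =
    connected_component (Ws_eps f (alpha / 2) x `&` Ws_eps_n f eps n x) x.
Proof.
move=> cX hfg eps_ge0 eps_le expands Nn.
have alpha_ge0 : 0 <= alpha by lra.
apply/seteqP; split.
  apply: connected_component_max; [exact: CWs_eps_refl | | exact: component_connected].
  move=> z /connected_component_sub Wz.
  by split => [k | r _]; [exact: le_trans (Wz k) eps_le | exact: Wz].
set K := connected_component _ x.
have Kx : K x.
  by apply: connected_component_refl; split => [k | r _]; rewrite mdistxx //; lra.
have KC : K `<=` CWs_eps f (alpha / 2) x.
  apply: connected_component_max => //; last exact: component_connected.
  by move=> w /connected_component_sub [].
apply: connected_component_max => //; last exact: component_connected.
move=> z Kz k; have [kn|nk] := leqP k n.
  by case: (connected_component_sub Kz) => _; apply.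
have /connected_component_sub/(_ (k - n)%N) :=
  iter_CWs_eps_sub cX hfg alpha_ge0 expands Nn _ (imageP _ (KC z Kz)).
by rewrite -!iterD subnK // ltnW.
Qed.

End dynamics.

Theorem mainTheorem4 (R : realType) (X : metricType R) (f g : X -> X) (alpha : R) :
  compact [set: X] -> homeo f g -> cw_expansive f g alpha ->
  forall (x : X) (eps : R) (Neps : nat),
    0 < eps -> eps < alpha / 2 -> (0 < Neps)%N ->
    (forall C : set X, continuum C -> diam C >= eps ->
       exists n : int, `|n| <= Neps%:Z /\ diam (zpow f g n @` C) > alpha) ->
    forall n : nat, (Neps <= n)%N ->
      [/\ iter n f @` CWs_eps f (alpha / 2) x `<=` CWs_eps f eps (iter n f x),
          CWs_eps f eps x `<=` Ws f x
        & CWs_eps f eps x =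
            connected_component (Ws_eps f (alpha / 2) x `&` Ws_eps_n f eps n x) x].
Proof.
move=> cX hfg cw x eps N eps_gt0 eps_lt _ expands n Nn.
have alpha_ge0 : 0 <= alpha by lra.
split.
- exact: iter_CWs_eps_sub cX hfg alpha_ge0 expands Nn.
- exact: CWs_eps_sub_Ws cX hfg cw (ltW eps_gt0) eps_lt.
- exact: CWs_eps_component_Ws_eps_n cX hfg (ltW eps_gt0) (ltW eps_lt) expands Nn.
Qed.
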